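(* Let $I$ be an index set of non-measurable cardinality and $H$ the group $\mathbb Z^{(I)}$ with the topology of pointwise convergence on $\mathbb Z^I$. Let $\bar t\in\mathbb T^I$ be such that $\bar t(i)=\frac{p_i}{q_i}t_0$ (modulo $1$) for all $i\in I$, where $p_i,q_i$ are relatively prime integers for each $i$, and $t_0$ is either an irrational number or $1$. Then $\bar t\in\widehat H$ if and only if the family $(|q_i|)_{i\in I}$ is bounded.
   Context: $\mathbb Z^{(I)}$ is the group of finitely supported functions $I\to\mathbb Z$, paired with $\mathbb Z^I$ by $\langle\bar g,\bar x\rangle=\sum_i\bar g(i)\bar x(i)$; $H$ carries the weakest topology making all maps $\bar g\mapsto\langle\bar g,\bar x\rangle\in\mathbb Z$ ($\mathbb Z$ discrete) continuous. $\mathbb T=\mathbb R/\mathbb Z$, identified with $(-1/2,1/2]$. An element $\bar t\in\mathbb T^I$ is identified with the homomorphism $H\to\mathbb T$, $\bar g\mapsto\sum_i\bar g(i)\bar t(i)$, and $\widehat H$ (continuous homomorphisms $H\to\mathbb T$) is thereby a subgroup of $\mathbb T^I$. *)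

From HB Require Import structures.
From mathcomp Require Import all_boot all_order all_algebra.
From mathcomp Require Import boolp classical_sets functions cardinality fsbigop reals.
Set Implicit Arguments. Unset Strict Implicit. Unset Printing Implicit Defensive.
Import Order.TTheory GRing.Theory Num.Theory.
Local Open Scope classical_set_scope.
Local Open Scope ring_scope.

Definition ulam_measurable (I : Type) : Prop :=
  exists U : set (set I),
    U setT /\ ~ U set0 /\
    (forall A B, U A -> A `<=` B -> U B) /\
    (forall A, U A \/ U (~` A)) /\
    (forall F : nat -> set I, (forall n, U (F n)) -> U (\bigcap_n F n)) /\
    (forall i, ~ U [set i]).

(* elements of H = Z^(I): finitely supported functions I -> Z *)
Definition finsupp (I : choiceType) (g : I -> int) : Prop :=
  finite_set [set i | g i != 0].

Definition pairing (I : choiceType) (g x : I -> int) : int :=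
  \sum_(i \in [set i | g i != 0]) g i * x i.

(* the homomorphism H -> R whose reduction mod 1 is the element t of T^I
   (t given by real representatives) : g |-> sum_i g(i) t(i) *)
Definition charR (R : realType) (I : choiceType) (t : I -> R) (g : I -> int) : R :=
  \sum_(i \in [set i | g i != 0]) (g i)%:~R * t i.

(* a map f : H -> R, viewed modulo 1 as a map H -> T = R/Z, is continuous
   for the weak topology sigma(Z^(I), Z^I) on H (Z discrete) and the usual
   (quotient metric) topology on T.  Basic neighbourhoods of g in H are
   { h | <h,x_k> = <g,x_k>, k < n } for finitely many x_k in Z^I. *)
Definition weak_continuous_modZ (R : realType) (I : choiceType)
    (f : (I -> int) -> R) : Prop :=
  forall g, finsupp g -> forall e : R, 0 < e ->
    exists (n : nat) (xs : 'I_n -> I -> int),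
      forall h, finsupp h ->
        (forall k, pairing h (xs k) = pairing g (xs k)) ->
        exists m : int, `|f h - f g - m%:~R| < e.

Definition in_dual (R : realType) (I : choiceType) (t : I -> R) : Prop :=
  weak_continuous_modZ (charR t).

From HB Require Import structures.
From mathcomp Require Import all_boot all_order all_algebra.
From mathcomp Require Import boolp classical_sets functions cardinality fsbigop reals.
From mathcomp Require Import ring lra zify.
Import Order.TTheory GRing.Theory Num.Theory.
Set Implicit Arguments. Unset Strict Implicit. Unset Printing Implicit Defensive.
Local Open Scope ring_scope.

(* Write chi_t for the character g |-> sum_i g(i) t(i) mod 1.
   Continuity of chi_t at 0 yields x_1, ..., x_n in Z^I such that chi_t only
   takes values close to 0 mod 1 on their annihilator; since the annihilator is
   a subgroup, chi_t in fact vanishes there.  The restrictions of the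
   coordinate maps e_i to the span of the x_k have finite rank, so there are a
   finite S in I and D <> 0 such that every D e_i is an integral combination of
   the e_s (s in S) on that span.  Hence D t(i) + sum_s L_s t(s) is an integer,
   and clearing denominators, with t0 irrational or 1, gives
   q_i | D * prod_(s in S) q_s.  Conversely, if all |q_i| <= B then modulo 1
   every t(i) is an integer multiple a_i of t0 / B!, so chi_t factors through
   the single continuous map <., a>. *)

Definition zpair (V : pzRingType) (I : choiceType) (g : I -> int) (y : I -> V) : V :=
  \sum_(i \in [set i | g i != 0]%classic) (g i)%:~R * y i.

Lemma charRE (R : realType) (I : choiceType) (t : I -> R) (g : I -> int) :
  charR t g = zpair g t.
Proof. by []. Qed.

Lemma pairingE (I : choiceType) (g x : I -> int) : pairing g x = zpair g x.
Proof. by apply: eq_fsbigr => i _; rewrite intz. Qed.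

Definition lincomb (V : pzRingType) (I : Type) (L : seq (int * I)) (y : I -> V) : V :=
  \sum_(u <- L) u.1%:~R * y u.2.

Definition fcomb (I : eqType) (L : seq (int * I)) (k : I) : int :=
  \sum_(u <- L | k == u.2) u.1.

Definition scale_comb (I : Type) (w : int) (L : seq (int * I)) : seq (int * I) :=
  [seq (w * u.1, u.2) | u <- L].

Section FiniteSupport.
Variable I : choiceType.
Implicit Types (g : I -> int) (r : seq I).

Lemma finsupp_seq g r : (forall i, g i != 0 -> i \in r) -> finsupp g.
Proof. by move=> supp_r; apply: sub_finite_set (finite_seq r) => i /supp_r. Qed.

Lemma finsupp_enum g :
  finsupp g -> exists2 r, uniq r & forall i, g i != 0 -> i \in r.
Proof.
move=> fin_g; exists (finmap.enum_fset (fset_set [set i | g i != 0]%classic)).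
  exact: finmap.fset_uniq.
by move=> i gi; rewrite in_fset_set // inE.
Qed.

Lemma finsuppZ (j : int) g : finsupp g -> finsupp (fun i => j * g i).
Proof.
by apply: sub_finite_set => i /=; rewrite mulf_eq0 negb_or => /andP[].
Qed.

Lemma fcomb_supp (L : seq (int * I)) k : fcomb L k != 0 -> k \in map snd L.
Proof.
apply: contraR => kL; rewrite /fcomb big1_seq // => u /andP[/eqP ku uL].
by case/negP: kL; rewrite ku map_f.
Qed.

Lemma finsupp_fcomb (L : seq (int * I)) : finsupp (fcomb L).
Proof. exact/finsupp_seq/fcomb_supp. Qed.

Lemma zpair_seq (V : pzRingType) g (y : I -> V) r :
  uniq r -> (forall i, g i != 0 -> i \in r) ->
  zpair g y = \sum_(i <- r) (g i)%:~R * y i.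
Proof.
move=> r_uniq supp_r; apply: fsbig_fwiden => // i [_ /negP].
by rewrite negbK => /eqP gi0; rewrite /preimage /= gi0 mul0r.
Qed.

Lemma zpair0 (V : pzRingType) (y : I -> V) : zpair (fun _ => 0) y = 0.
Proof. by apply: fsbig1 => i /negP. Qed.

Lemma zpairZ (V : pzRingType) (j : int) g (y : I -> V) :
  finsupp g -> zpair (fun i => j * g i) y = j%:~R * zpair g y.
Proof.
case/finsupp_enum => r r_uniq supp_r.
rewrite (zpair_seq _ r_uniq supp_r) (zpair_seq _ r_uniq); last first.
  by move=> i; rewrite mulf_eq0 negb_or => /andP[_ /supp_r].
by rewrite mulr_sumr; apply: eq_bigr => i _; rewrite intrM mulrA.
Qed.

Lemma zpair_affine (V : pzRingType) g (a m : I -> int) (c : V) (y : I -> V) :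
  finsupp g -> (forall i, y i = (a i)%:~R * c + (m i)%:~R) ->
  zpair g y = (zpair g a)%:~R * c + (zpair g m)%:~R.
Proof.
case/finsupp_enum => r r_uniq supp_r y_def.
rewrite (zpair_seq y r_uniq supp_r) (zpair_seq a r_uniq supp_r).
rewrite (zpair_seq m r_uniq supp_r) !rmorph_sum mulr_suml -big_split /=.
by apply: eq_bigr => i _; rewrite y_def mulrDr !intrM !intz mulrA.
Qed.

Lemma zpair_fcomb (V : pzRingType) (L : seq (int * I)) (y : I -> V) :
  zpair (fcomb L) y = lincomb L y.
Proof.
have r_uniq := undup_uniq (map snd L).
rewrite (zpair_seq _ r_uniq) => [|i /fcomb_supp]; last by rewrite mem_undup.
under eq_bigr => k _ do rewrite rmorph_sum mulr_suml.
rewrite (exchange_big_dep xpredT) //=; apply: eq_big_seq => u uL.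
by rewrite -big_filter (filter_pred1_uniq r_uniq) ?big_seq1 // mem_undup map_f.
Qed.

End FiniteSupport.

Lemma lincomb_scale (V : pzRingType) (I : Type) (w : int) (L : seq (int * I))
    (y : I -> V) :
  lincomb (scale_comb w L) y = w%:~R * lincomb L y.
Proof.
by rewrite /lincomb big_map mulr_sumr; apply: eq_bigr => u _; rewrite intrM mulrA.
Qed.

Lemma lincomb_cat (V : pzRingType) (I : Type) (L1 L2 : seq (int * I)) (y : I -> V) :
  lincomb (L1 ++ L2) y = lincomb L1 y + lincomb L2 y.
Proof. exact: big_cat. Qed.

Lemma coord_relations (I : choiceType) (l : seq (I -> int)) :
  exists (S : seq I) (D : int), D != 0 /\ forall i, exists L : seq (int * I),
    all (fun u => u.2 \in S) L /\ all (fun y => lincomb ((D, i) :: L) y == 0) l.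
Proof.
elim: l => [|x l [S [D [D_neq0 rel]]]].
  by exists [::], 1; split => // i; exists [::].
have [[j [Lj [LjS Ljl wj_neq0]]] | kill_x] := pselect (exists i L,
  [/\ all (fun u => u.2 \in S) L, all (fun y => lincomb ((D, i) :: L) y == 0) l
    & lincomb ((D, i) :: L) x != 0]); last first.
  exists S, D; split => // i; have [L [LS Ll]] := rel i.
  exists L; split => //=; rewrite Ll andbT.
  by apply: contra_notT kill_x => Lx; exists i, L.
set wj := lincomb ((D, j) :: Lj) x.
exists (j :: S), (wj * D); split; first by rewrite mulf_neq0.
move=> i; have [Li [LiS Lil]] := rel i; set wi := lincomb ((D, i) :: Li) x.
exists (scale_comb wj Li ++ scale_comb (- wi) ((D, j) :: Lj)); split.
  have widen L : all (fun u => u.2 \in S) L -> all (fun u => u.2 \in j :: S) L.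
    by apply: sub_all => u /= uS; rewrite in_cons uS orbT.
  by rewrite all_cat /= !all_map mem_head !widen.
have relE y : lincomb ((wj * D, i) :: scale_comb wj Li ++
      scale_comb (- wi) ((D, j) :: Lj)) y =
    wj * lincomb ((D, i) :: Li) y - wi * lincomb ((D, j) :: Lj) y.
  rewrite -[_ :: _ ++ _]/(scale_comb wj ((D, i) :: Li) ++ _).
  by rewrite lincomb_cat !lincomb_scale !intz mulNr.
rewrite /= relE mulrC subrr eqxx /=; apply/allP => y yl.
by rewrite relE (eqP (allP Lil y yl)) (eqP (allP Ljl y yl)) !mulr0 subrr.
Qed.

Lemma intr_norm_lt1 (R : numDomainType) (z : int) : `|(z%:~R : R)| < 1 -> z = 0.
Proof. by rewrite -intr_norm ltrz1; lia. Qed.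

Lemma int_of_near_int_multiples (R : archiRealFieldType) (c : R) :
  (forall j : nat, exists m : int, `|j%:R * c - m%:~R| < 1/4) ->
  exists m : int, c = m%:~R.
Proof.
move=> near; have [m1 c_m1] := near 1%N; rewrite (mul1r c) in c_m1.
exists m1; set d := c - m1%:~R in c_m1 *.
have small j : `|j%:R * d| < 1/4.
  elim: j => [|j IHj]; first by rewrite mul0r normr0; lra.
  have [m cm] := near j.+1; set e := _ - _ in cm.
  have dE : j.+1%:R * d = e + (m - j.+1%:Z * m1)%:~R.
    by rewrite /e /d intrB intrM; ring.
  rewrite dE; suff -> : m - j.+1%:Z * m1 = 0 by rewrite addr0.
  apply: (@intr_norm_lt1 R).
  have -> : (m - j.+1%:Z * m1)%:~R = j%:R * d + d - e :> R.
    by rewrite /e /d intrB intrM; ring.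
  have := ler_normB (j%:R * d + d) e; have := ler_normD (j%:R * d) d; lra.
apply/eqP; rewrite -subr_eq0 -/d; apply/negPn/negP => d_neq0.
have [k k_large] : exists k : nat, 1 < k%:R * `|d|.
  exists (Num.truncn `|d|^-1).+1.
  by rewrite -ltr_pdivrMr ?normr_gt0 // div1r truncnS_gt.
by have := small k; rewrite normrM normr_nat; lra.
Qed.

Lemma in_dual_int_on_annihilator (R : realType) (I : choiceType) (t : I -> R) :
  in_dual t -> exists n (xs : 'I_n -> I -> int), forall h, finsupp h ->
    (forall k, pairing h (xs k) = 0) -> exists m : int, charR t h = m%:~R.
Proof.
have fin0 : finsupp (fun _ : I => 0 : int).
  by apply: (@finsupp_seq _ _ [::]) => i; rewrite eqxx.
move=> /(_ _ fin0 (1/4)) [|n [xs near0]]; first lra.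
exists n, xs => h fin_h h_perp; apply: int_of_near_int_multiples => j.
have [k|m jh_near] := near0 (fun i => j%:Z * h i) (finsuppZ _ fin_h).
  by rewrite !pairingE zpairZ // zpair0 -pairingE h_perp mulr0.
by exists m; move: jh_near; rewrite !charRE zpairZ // zpair0 subr0.
Qed.

Lemma in_dual_relations (R : realType) (I : choiceType) (t : I -> R) :
  in_dual t -> exists (S : seq I) (D : int), D != 0 /\ forall i,
    exists L : seq (int * I), all (fun u => u.2 \in S) L /\
    exists m : int, lincomb ((D, i) :: L) t = m%:~R.
Proof.
case/in_dual_int_on_annihilator => n [xs int_on_perp].
have [S [D [D_neq0 rel]]] := coord_relations [seq xs k | k <- enum 'I_n].
exists S, D; split => // i; have [L [LS Lxs]] := rel i.
exists L; split => //; rewrite -zpair_fcomb -charRE.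
apply: int_on_perp => [|k]; first exact: finsupp_fcomb.
by rewrite pairingE zpair_fcomb; apply/eqP/(allP Lxs)/map_f; rewrite mem_enum.
Qed.

Lemma intr_mul_irrational_or_one (R : realType) (t0 : R) (a b : int) :
  irrational t0 \/ t0 = 1 -> a%:~R * t0 = b%:~R -> a = 0 \/ a = b.
Proof.
case=> [t0_irr | ->]; last by rewrite mulr1 => /intr_inj; right.
have [-> _ | a_neq0 abE] := eqVneq a 0; [by left | case: t0_irr].
exists (b%:Q / a%:Q) => //.
by rewrite fmorph_div /= !ratr_int -abE mulrAC mulfV ?mul1r // intr_eq0.
Qed.

Lemma intr_ratio_common_denom (F : numFieldType) (p q Q : int) :
  q != 0 -> Q != 0 -> (q %| Q)%Z ->
  p%:~R / q%:~R = (p * (Q %/ q)%Z)%:~R / Q%:~R :> F.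
Proof.
move=> q_neq0 Q_neq0 /divzK; set k := (Q %/ q)%Z => kqE.
have k_neq0 : k != 0 by apply: contraNneq Q_neq0 => k0; rewrite -kqE k0 mul0r.
by rewrite -kqE !intrM; field; rewrite !intr_eq0 q_neq0 k_neq0.
Qed.

Section Denominators.
Variables (R : realType) (I : choiceType) (t : I -> R) (p q mf : I -> int) (t0 : R).
Hypothesis q_neq0 : forall i, q i != 0.
Hypothesis t_def : forall i, t i = (p i)%:~R / (q i)%:~R * t0 + (mf i)%:~R.
Variable S : seq I.
Let Q := \prod_(s <- S) q s.

Let Q_neq0 : Q != 0.
Proof. by rewrite prodf_seq_neq0; apply/allP => s _; rewrite q_neq0. Qed.

Let dvdz_Q s : s \in S -> (q s %| Q)%Z.
Proof. by move=> sS; rewrite /Q (big_rem s sS) dvdz_mulr. Qed.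

Lemma lincomb_common_denom (L : seq (int * I)) : all (fun u => u.2 \in S) L ->
  lincomb L t =
    (lincomb L (fun s => p s * (Q %/ q s)%Z))%:~R / Q%:~R * t0 + (lincomb L mf)%:~R.
Proof.
move=> LS; rewrite /lincomb !rmorph_sum !mulr_suml -big_split /=.
apply: eq_big_seq => u uL; have uS := allP LS u uL.
rewrite t_def (@intr_ratio_common_denom R _ _ _ (q_neq0 _) Q_neq0 (dvdz_Q uS)).
rewrite !intrM !intz.
by field; rewrite intr_eq0.
Qed.

Hypothesis coprime_pq : forall i, coprimez (p i) (q i).
Hypothesis t0_rigid : irrational t0 \/ t0 = 1.

Lemma dvdz_relation_denom (D : int) (i : I) (L : seq (int * I)) (m : int) :
  all (fun u => u.2 \in S) L -> lincomb ((D, i) :: L) t = m%:~R ->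
  (q i %| D * Q)%Z.
Proof.
move=> LS; rewrite /lincomb big_cons -/(lincomb L t) lincomb_common_denom // t_def /=.
set C := lincomb L _; set N := m - D * mf i - lincomb L mf => rel.
have t0_rel : (D * Q * p i + q i * C)%:~R * t0 = (q i * Q * N)%:~R :> R.
  have qi_neq0 : (q i)%:~R != 0 :> R by rewrite intr_eq0.
  have QR_neq0 : Q%:~R != 0 :> R by rewrite intr_eq0.
  have := congr1 (fun x => (q i)%:~R * Q%:~R * (x - m%:~R)) rel.
  rewrite /= subrr mulr0 => rel0; apply/eqP; rewrite -subr_eq0 -rel0; apply/eqP.
  by rewrite /N !(intrD, intrN, intrM); field; rewrite qi_neq0 QR_neq0.
have : (q i %| D * Q * p i + q i * C)%Z.
  have [-> | ->] := intr_mul_irrational_or_one t0_rigid t0_rel; first exact: dvdz0.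
  by rewrite -mulrA dvdz_mulr.
have qC : (q i %| q i * C)%Z by apply/dvdz_mulr/dvdzz.
have coprime_qp : coprimez (q i) (p i) by rewrite coprimez_sym.
by rewrite (rpredDr _ qC) Gauss_dvdzl.
Qed.

End Denominators.

Lemma in_dual_int_multiples (R : realType) (I : choiceType) (t : I -> R)
    (a m : I -> int) (c : R) :
  (forall i, t i = (a i)%:~R * c + (m i)%:~R) -> in_dual t.
Proof.
move=> t_def g fin_g e e_gt0; exists 1%N, (fun=> a) => h fin_h /(_ ord0).
rewrite !pairingE => hg_a; exists (zpair h m - zpair g m).
rewrite !charRE (zpair_affine fin_h t_def) (zpair_affine fin_g t_def) hg_a intrB.
by rewrite opprD addrACA subrr add0r subrr normr0.
Qed.

Theorem lemma4p14 (R : realType) (I : choiceType) (t : I -> R) (p q : I -> int)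
    (t0 : R) :
  ~ ulam_measurable I ->
  (forall i, q i != 0) ->
  (forall i, coprimez (p i) (q i)) ->
  (irrational t0 \/ t0 = 1) ->
  (forall i, exists m : int, t i = ((p i)%:~R / (q i)%:~R) * t0 + m%:~R) ->
  (in_dual t <-> exists B : nat, forall i, (`|q i| <= B)%N).
Proof.
(* in_dual is continuity for sigma(Z^(I), Z^I) itself. *)
move=> _ q_neq0 coprime_pq t0_rigid /choice[mf t_def]; split.
  case/in_dual_relations => S [D [D_neq0 rel]].
  exists (absz (D * \prod_(s <- S) q s)) => i; have [L [LS [m Lm]]] := rel i.
  apply: dvdn_leq; last first.
    by rewrite -dvdzE (dvdz_relation_denom q_neq0 t_def coprime_pq t0_rigid LS Lm).
  by rewrite absz_gt0 mulf_neq0 // prodf_seq_neq0; apply/allP => s _; rewrite q_neq0.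
case=> B q_le_B; pose N : int := B`!.
have N_neq0 : N != 0 by rewrite eqz_nat -lt0n fact_gt0.
apply: (@in_dual_int_multiples _ _ _ (fun i => p i * (N %/ q i)%Z) mf (t0 / N%:~R)).
move=> i.
have q_dvd_N : (q i %| N)%Z by apply: dvdn_fact; rewrite absz_gt0 q_neq0 q_le_B.
rewrite t_def (@intr_ratio_common_denom R _ _ _ (q_neq0 i) N_neq0 q_dvd_N).
by rewrite mulrAC -mulrA.
Qed.
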